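(* Let $X$ be a Tychonoff space whose $P$-number is $\tau$, and suppose $X$ has a $\tau$-discrete basis of clopen sets. Then $X^n$ is a generalized ordered space for every natural number $n$.
   Context: All spaces are Tychonoff. The $P$-number of a space $X$ is $|X|$ if $X$ is discrete; otherwise it is the largest cardinal $\tau$ such that the intersection of any family of fewer than $\tau$ open subsets of $X$ is open. A family of subsets of $X$ is discrete if every point of $X$ has a neighborhood meeting at most one member of the family. A $\tau$-discrete basis of clopen sets is a base for the topology of the form $\bigcup_{\alpha<\tau}\mathcal B_\alpha$ consisting of clopen sets, with each $\mathcal B_\alpha$ a discrete family. A generalized ordered space (GO-space) is a space homeomorphic to a subspace of a linearly ordered topological space (a space whose topology is generated by open intervals and open rays of some linear order). *)

From HB Require Import structures.
From mathcomp Require Import all_boot all_order all_algebra.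
From mathcomp Require Import all_classical all_reals all_analysis.
From mathcomp Require Import Rstruct Rstruct_topology.

Set Implicit Arguments.
Unset Strict Implicit.
Unset Printing Implicit Defensive.

Import Order.TTheory GRing.Theory Num.Theory.
Local Open Scope classical_set_scope.

Definition completely_regular (X : topologicalType) : Prop :=
  forall (F : set X) (x : X), closed F -> ~ F x ->
    exists f : X -> Rdefinitions.R,
      continuous f /\ f x = 0%R /\ (forall y, F y -> f y = 1%R).

Definition tychonoff_space (X : topologicalType) : Prop :=
  @accessible_space X /\ completely_regular X.

Definition discrete_sp (X : topologicalType) : Prop :=
  forall x : X, open [set x].

(* Every family of fewer than |K| open sets has open intersection.  A family
   of fewer than |K| sets is indexed by a subset A of K whose cardinal is
   strictly smaller than that of K. *)
Definition small_intersections_open (X : topologicalType) (K : Type) : Prop :=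
  forall (A : set K), ~ ([set: K] #<= A)%card ->
  forall U : K -> set X, (forall i, A i -> open (U i)) ->
    open (\bigcap_(i in A) U i).

(* The P-number of X is |K|:  |X| if X is discrete, otherwise the largest
   cardinal tau such that intersections of fewer than tau open sets are open. *)
Definition pnumber_is (X : topologicalType) (K : Type) : Prop :=
  (discrete_sp X -> ([set: K] #= [set: X])%card) /\
  (~ discrete_sp X ->
     small_intersections_open X K /\
     (forall J : Type, small_intersections_open X J ->
        ([set: J] #<= [set: K])%card)).

Definition discrete_family (X : topologicalType) (F : set (set X)) : Prop :=
  forall x : X, exists N : set X, nbhs x N /\
    forall U V, F U -> F V -> N `&` U !=set0 -> N `&` V !=set0 -> U = V.

Definition tau_discrete_clopen_basis (X : topologicalType) (K : Type) : Prop :=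
  exists B : K -> set (set X),
    (forall a, discrete_family (B a)) /\
    (forall a U, B a U -> clopen U) /\
    basis (\bigcup_(a in [set: K]) B a).

(* Generalized ordered space: homeomorphic to a subspace of a linearly ordered
   topological space (f is a topological embedding). *)
Definition GO_space (Y : topologicalType) : Prop :=
  exists (d : Order.disp_t) (L : orderTopologicalType d) (f : Y -> L),
    injective f /\ continuous f /\
    (forall U : set Y, open U ->
       exists V : set L, open V /\ f @` U = V `&` range f).

From HB Require Import structures.
From mathcomp Require Import all_boot all_order all_algebra.
From mathcomp Require Import all_classical all_reals all_analysis.
From mathcomp Require Import wochoice.
Import Order.TTheory.
Set Implicit Arguments.
Unset Strict Implicit.
Local Open Scope classical_set_scope.

(* Well-order K so that every proper initial segment has fewer than |K|
   elements.  Code a point y of X^n by the K-indexed sequence whose a-th term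
   lists, for each coordinate i, the members of B_a containing y i, and order
   the codes lexicographically.  Points whose codes agree up to a are those lying
   in the same members of B_b for all b <= a; by the P-number hypothesis this is
   an open condition (an intersection of fewer than |K| open sets), and since B
   is a base these cells form a neighbourhood base.  Tagging each term with 1,
   between the tags 0 and 2, makes the level-a cell of x the trace of a
   lexicographic open interval, so the coding embeds X^n into a linearly ordered
   space. *)

(** * Strict total orders and lexicographic orders *)

Record strict_total_order (T : Type) := StrictTotalOrder {
  sto_lt :> T -> T -> Prop;
  sto_irr : forall a, ~ sto_lt a a;
  sto_trans : forall a b c, sto_lt a b -> sto_lt b c -> sto_lt a c;
  sto_trichotomy : forall a b, a = b \/ sto_lt a b \/ sto_lt b a }.
Arguments sto_irr {T} _ _ _.
Arguments sto_trans {T} _ {a b c} _ _.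
Arguments sto_trichotomy {T} _ _ _.

Definition sto_le (T : Type) (s : strict_total_order T) (a b : T) := a = b \/ s a b.

Record strict_well_order (T : Type) := StrictWellOrder {
  swo_sto :> strict_total_order T;
  swo_min : forall S : set T, S !=set0 ->
    exists2 m, S m & forall b, S b -> ~ swo_sto b m }.
Arguments swo_min {T} _ _ _.

Lemma sto_lt_asym (T : Type) (s : strict_total_order T) a b : s a b -> ~ s b a.
Proof. by move=> ab ba; apply: (sto_irr s a); apply: sto_trans ab ba. Qed.

Lemma sto_lt_le_trans (T : Type) (s : strict_total_order T) a b c :
  s a b -> sto_le s b c -> s a c.
Proof. by move=> ab [<-//|bc]; apply: sto_trans ab bc. Qed.

Lemma sto_le_total (T : Type) (s : strict_total_order T) a b :
  exists c, sto_le s a c /\ sto_le s b c.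
Proof.
case: (sto_trichotomy s a b) => [<-|[ab|ba]]; first by exists a; split; left.
- by exists b; split; [right|left].
- by exists a; split; [left|right].
Qed.

Section OrderStrictTotalOrder.
Variables (d : Order.disp_t) (T : orderType d).

Lemma order_lt_trichotomy (a b : T) : a = b \/ (a < b)%O \/ (b < a)%O.
Proof. by case: (ltgtP a b) => h; [right; left|right; right|left]. Qed.

Lemma order_lt_irr (a : T) : ~ (a < a)%O.
Proof. by rewrite ltxx. Qed.

Definition order_sto : strict_total_order T :=
  StrictTotalOrder order_lt_irr (fun a b c => @lt_trans _ _ b a c)
    order_lt_trichotomy.

End OrderStrictTotalOrder.

Section LexProduct.
Variables (D E : Type) (sD : strict_total_order D) (sE : strict_total_order E).

Definition lexprod_lt (p q : D * E) := sD p.1 q.1 \/ (p.1 = q.1 /\ sE p.2 q.2).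

Lemma lexprod_lt_irr p : ~ lexprod_lt p p.
Proof. by case=> [|[_]]; apply: sto_irr. Qed.

Lemma lexprod_lt_trans p q r : lexprod_lt p q -> lexprod_lt q r -> lexprod_lt p r.
Proof.
case=> [h1|[e1 h1]] [h2|[e2 h2]].
- by left; apply: sto_trans h1 h2.
- by left; rewrite -e2.
- by left; rewrite e1.
- by right; split; [rewrite e1 | apply: sto_trans h1 h2].
Qed.

Lemma lexprod_lt_trichotomy p q : p = q \/ lexprod_lt p q \/ lexprod_lt q p.
Proof.
case: p q => [a m] [b k]; rewrite /lexprod_lt /=.
case: (sto_trichotomy sD a b) => [<-|[h|h]]; last 2 first.
- by right; left; left.
- by right; right; left.
case: (sto_trichotomy sE m k) => [<-|[h|h]]; first by left.
- by right; left; right.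
- by right; right; right.
Qed.

Definition lexprod_sto : strict_total_order (D * E) :=
  StrictTotalOrder lexprod_lt_irr lexprod_lt_trans lexprod_lt_trichotomy.

Lemma lexprod_le_squeeze d d' e e' e'' :
  sto_le lexprod_sto (d, e) (d', e') -> sto_le lexprod_sto (d', e') (d, e'') -> d' = d.
Proof.
have le_fst p q : sto_le lexprod_sto p q -> sto_le sD p.1 q.1.
  by case=> [->|[|[]]]; [left|right|left].
move=> /le_fst /= [->//|dd'] /le_fst /= [//|d'd].
by case: (sto_lt_asym dd' d'd).
Qed.

End LexProduct.

Section LexFunctions.
Variables (K E : Type) (w : strict_well_order K) (s : strict_total_order E).
Implicit Types (f g h u v : K -> E) (a b : K).

Definition agree_below a f g := forall b, w b a -> f b = g b.
Definition agree_upto a f g := forall b, sto_le w b a -> f b = g b.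

Definition lexfun_lt f g := exists a, agree_below a f g /\ s (f a) (g a).

Lemma agree_upto_le a a' f g : sto_le w a' a -> agree_upto a f g -> agree_upto a' f g.
Proof.
by move=> a'a fg b ba'; apply: fg; case: ba' => [->//|ba']; right;
  apply: sto_lt_le_trans ba' a'a.
Qed.

Lemma lexfun_lt_irr f : ~ lexfun_lt f f.
Proof. by case=> a [_]; apply: sto_irr. Qed.

Lemma lexfun_lt_trans f g h : lexfun_lt f g -> lexfun_lt g h -> lexfun_lt f h.
Proof.
move=> [a [fga ha]] [c [ghc hc]].
case: (sto_trichotomy w a c) => [ac|[ac|ca]].
- subst c; exists a; split; first by move=> b ba; rewrite fga // ghc.
  exact: sto_trans ha hc.
- exists a; split; first by move=> b ba; rewrite fga // ghc //; apply: sto_trans ba ac.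
  by rewrite -(ghc a ac).
- exists c; split; first by move=> b bc; rewrite fga ?ghc //; apply: sto_trans bc ca.
  by rewrite (fga c ca).
Qed.

Lemma lexfun_lt_trichotomy f g : f = g \/ lexfun_lt f g \/ lexfun_lt g f.
Proof.
have [->|nfg] := pselect (f = g); [by left | right].
have differ : [set b | f b <> g b] !=set0.
  apply: contrapT => nodiff; apply/nfg/funext => b.
  by apply: contrapT => fgb; apply: nodiff; exists b.
have [m fgm mmin] := swo_min w _ differ.
have below : agree_below m f g.
  by move=> b bm; apply: contrapT => fgb; exact: mmin fgb bm.
case: (sto_trichotomy s (f m) (g m)) => [//|[fgm'|gfm']].
- by left; exists m.
- by right; exists m; split=> // b bm; rewrite below.
Qed.

Lemma lexfun_lt_stable_right f g :
  lexfun_lt f g -> exists a, forall h, agree_upto a h g -> lexfun_lt f h.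
Proof.
move=> [a [fga ha]]; exists a => h hg; exists a; split; last by rewrite hg //; left.
by move=> b ba; rewrite fga // hg //; right.
Qed.

Lemma lexfun_lt_stable_left f g :
  lexfun_lt f g -> exists a, forall h, agree_upto a h f -> lexfun_lt h g.
Proof.
move=> [a [fga ha]]; exists a => h hf; exists a; split; last by rewrite hf //; left.
by move=> b ba; rewrite -fga // hf //; right.
Qed.

Lemma lexfun_lt_between a u f v :
  lexfun_lt u f -> lexfun_lt f v -> agree_below a u v ->
  [/\ agree_below a f u, sto_le s (u a) (f a) & sto_le s (f a) (v a)].
Proof.
move=> uf fv uv; case: (uf) => [a1 [uf1 lt1]]; case: (fv) => [a2 [fv2 lt2]].
have a_le_a1 : sto_le w a a1.
  case: (sto_trichotomy w a a1) => [|[|a1a]]; [by left|by right|exfalso].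
  suff vf : lexfun_lt v f by apply: (lexfun_lt_irr (lexfun_lt_trans fv vf)).
  exists a1; split; last by rewrite -uv.
  by move=> b ba1; rewrite -uv ?uf1 //; apply: sto_trans ba1 a1a.
have a_le_a2 : sto_le w a a2.
  case: (sto_trichotomy w a a2) => [|[|a2a]]; [by left|by right|exfalso].
  suff fu : lexfun_lt f u by apply: (lexfun_lt_irr (lexfun_lt_trans uf fu)).
  exists a2; split; last by rewrite uv.
  by move=> b ba2; rewrite uv ?fv2 //; apply: sto_trans ba2 a2a.
split.
- by move=> b ba; rewrite uf1 //; apply: sto_lt_le_trans ba a_le_a1.
- by case: a_le_a1 => [->|aa1]; [right|left; rewrite uf1].
- by case: a_le_a2 => [->|aa2]; [right|left; rewrite fv2].
Qed.

Definition fupd f a (e : E) : K -> E := fun b => if pselect (b = a) then e else f b.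

Lemma fupd_eq f a e : fupd f a e a = e.
Proof. by rewrite /fupd; case: pselect. Qed.

Lemma fupd_below f a e b : w b a -> fupd f a e b = f b.
Proof.
by move=> ba; rewrite /fupd; case: pselect => // ba_eq; subst b; case: (sto_irr w a ba).
Qed.

Lemma lexfun_lt_fupdl f a e : s e (f a) -> lexfun_lt (fupd f a e) f.
Proof. by move=> ef; exists a; rewrite fupd_eq; split=> // b /fupd_below->. Qed.

Lemma lexfun_lt_fupdr f a e : s (f a) e -> lexfun_lt f (fupd f a e).
Proof. by move=> fe; exists a; rewrite fupd_eq; split=> // b /fupd_below->. Qed.

Definition lexfun_sto : strict_total_order (K -> E) :=
  StrictTotalOrder lexfun_lt_irr lexfun_lt_trans lexfun_lt_trichotomy.

End LexFunctions.

Definition sto_type (T : Type) (s : strict_total_order T) : Type := T.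

Section StoType.
Variables (T : Type) (s : strict_total_order T).
Local Notation S := (sto_type s).

HB.instance Definition _ := gen_eqMixin S.
HB.instance Definition _ := gen_choiceMixin S.

Definition sto_ltb (x y : S) : bool := `[< s x y >].

Lemma sto_ltb_irr : irreflexive sto_ltb.
Proof. by move=> x; apply/asboolP/sto_irr. Qed.

Lemma sto_ltb_trans : transitive sto_ltb.
Proof. by move=> y x z /asboolP xy /asboolP yz; apply/asboolP; apply: sto_trans xy yz. Qed.

HB.instance Definition _ := Order.Lt_isPOrder.Build Order.default_display S
  sto_ltb_irr sto_ltb_trans.

Lemma sto_typeE (x y : S) : (x < y)%O <-> s x y.
Proof. by split=> /asboolP. Qed.

Lemma sto_type_le_total : total (<=%O : rel S).
Proof.
move=> x y; rewrite !le_eqVlt; case: (sto_trichotomy s x y) => [->|[xy|yx]].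
- by rewrite eqxx.
- by have /sto_typeE -> := xy; rewrite orbT.
- by have /sto_typeE -> := yx; rewrite !orbT.
Qed.

HB.instance Definition _ := Order.POrder_isTotal.Build Order.default_display S
  sto_type_le_total.

End StoType.

Section LexFunctionIntervals.
Variables (K E : Type) (w : strict_well_order K) (s : strict_total_order E) (k0 : K).
Local Notation L := (sto_type (lexfun_sto w s)).

Lemma lexfun_itv_stable (i : interval L) (f : L) : itv_open_ends i -> f \in i ->
  exists a, forall h : L, agree_upto w a h f -> h \in i.
Proof.
have above l : (l < f)%O -> exists a, forall h : L, agree_upto w a h f -> (l < h)%O.
  by move=> /sto_typeE/lexfun_lt_stable_right[a ha]; exists a => h /ha lh; apply/sto_typeE.
have below r : (f < r)%O -> exists a, forall h : L, agree_upto w a h f -> (h < r)%O.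
  by move=> /sto_typeE/lexfun_lt_stable_left[a ha]; exists a => h /ha lh; apply/sto_typeE.
move: i => [[[] l|[]] [[] r|[]]] //= _; rewrite ?in_itv /= ?andbT.
- case/andP=> /above[a1 h1] /below[a2 h2].
  have [a [a1a a2a]] := sto_le_total w a1 a2.
  exists a => h ha; rewrite in_itv /= h1 ?h2 //; exact: agree_upto_le ha.
- by move=> /above[a ha]; exists a => h /ha; rewrite in_itv /= andbT.
- by move=> /below[a ha]; exists a => h /ha; rewrite in_itv.
- by exists k0 => h _; rewrite in_itv.
Qed.

End LexFunctionIntervals.

(** * Lexicographic codes into a linearly ordered space *)

Section LexicographicCode.
Variables (K D : Type) (wK : strict_well_order K) (sD : strict_total_order D) (k0 : K).
Variables (Y : topologicalType) (c : K -> Y -> D).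

Local Notation L := (order_topology
  (sto_type (lexfun_sto wK (lexprod_sto sD (@order_sto _ nat))))).

Definition lex_code (y : Y) : L := fun a => (c a y, 1%N).

Definition lex_cell (a : K) (x : Y) : set Y := [set y | agree_upto wK a (c^~ y) (c^~ x)].

Hypothesis lex_cell_nbhs : forall x a, nbhs x (lex_cell a x).
Hypothesis lex_cell_base : forall x U, nbhs x U -> exists a, lex_cell a x `<=` U.
Hypothesis lex_code_sep : forall x y, (forall a, c a x = c a y) -> x = y.

Lemma lex_code_agree a x y : lex_cell a x y -> agree_upto wK a (lex_code y) (lex_code x).
Proof. by move=> xy b ba; rewrite /lex_code xy. Qed.

Lemma lex_code_inj : injective lex_code.
Proof. by move=> x y xy; apply: lex_code_sep => a; have [] := congr1 (fun f => f a) xy. Qed.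

Lemma lex_code_continuous : continuous lex_code.
Proof.
move=> x V; rewrite itv_nbhsE => -[i [oi xi] iV].
have [a ha] := lexfun_itv_stable k0 oi xi.
by apply: filterS (lex_cell_nbhs x a) => y /lex_code_agree /ha /iV.
Qed.

Definition lex_code_lo (x : Y) (a : K) : L := fupd (lex_code x) a (c a x, 0%N).
Definition lex_code_hi (x : Y) (a : K) : L := fupd (lex_code x) a (c a x, 2%N).

Lemma lex_code_in_itv x a : lex_code x \in `]lex_code_lo x a, lex_code_hi x a[%O.
Proof.
rewrite in_itv /=; apply/andP; split; apply/sto_typeE.
- by apply: lexfun_lt_fupdl; right.
- by apply: lexfun_lt_fupdr; right.
Qed.

Lemma lex_code_itv_cell x a y :
  lex_code y \in `]lex_code_lo x a, lex_code_hi x a[%O -> lex_cell a x y.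
Proof.
rewrite in_itv /= => /andP[/sto_typeE lo_y /sto_typeE y_hi].
have lo_hi : agree_below wK a (lex_code_lo x a) (lex_code_hi x a).
  by move=> b ba; rewrite /lex_code_lo /lex_code_hi !(fupd_below _ _ ba).
have [y_lo lo_ya ya_hi] := lexfun_lt_between lo_y y_hi lo_hi.
move=> b [->|ba].
  by move: lo_ya ya_hi; rewrite /lex_code_lo /lex_code_hi !fupd_eq; apply: lexprod_le_squeeze.
by have := y_lo b ba; rewrite /lex_code_lo (fupd_below _ _ ba) => -[].
Qed.

Lemma lex_code_open U : open U ->
  exists V : set L, open V /\ lex_code @` U = V `&` range lex_code.
Proof.
move=> oU; have /choice[a0 a0P] : forall x, exists a, U x -> lex_cell a x `<=` U.
  move=> x; have [Ux|nUx] := pselect (U x); last by exists k0.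
  by have [a xaU] := lex_cell_base (open_nbhs_nbhs (conj oU Ux)); exists a.
exists (\bigcup_(x in U) `]lex_code_lo x (a0 x), lex_code_hi x (a0 x)[); split.
  by apply: bigcup_open => x _; exact: itv_open.
apply/seteqP; split=> [_ [x Ux <-]|z [[x Ux xz] [y _ yz]]].
  by split; [exists x => //; apply: lex_code_in_itv | exists x].
subst z; exists y => //; apply: (a0P x Ux); exact: lex_code_itv_cell xz.
Qed.

Lemma lex_code_GO : GO_space Y.
Proof.
exists Order.default_display, L, lex_code.
by split; [exact: lex_code_inj | split; [exact: lex_code_continuous | exact: lex_code_open]].
Qed.

End LexicographicCode.

(** * Well-orders with small initial segments *)

Lemma well_order_trans (T : eqType) (R : rel T) : well_order R -> transitive R.
Proof.
move=> Rwo y x z xy yz.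
have Rch : wo_chain R predT by apply: withinW.
have Ranti := wo_chain_antisymmetric Rch.
pose S := [pred t | [|| t == x, t == y | t == z]].
have Sx : x \in S by rewrite in_simpl eqxx.
have Sy : y \in S by rewrite in_simpl eqxx orbT.
have Sz : z \in S by rewrite in_simpl eqxx !orbT.
have [m [[+ mlb] _]] := Rwo S (ex_intro _ x Sx).
rewrite in_simpl => /or3P[] /eqP ?; subst m.
- exact: mlb.
- by rewrite (@Ranti x y) ?mlb ?xy.
- by rewrite -(@Ranti y z) ?mlb ?yz.
Qed.

Lemma strict_well_order_inhabited (T : Type) : inhabited (strict_well_order T).
Proof.
have [R Rwo] := well_ordering_principle {classic T}.
have Rch : wo_chain R predT by apply: withinW.
have Ranti : antisymmetric R by move=> x y; apply: (wo_chain_antisymmetric Rch).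
have Rtotal : total R by move=> x y; apply: (wo_chainW Rch).
have Rtrans := well_order_trans Rwo.
pose lt (x y : T) := R x y /\ x <> y.
have lt_irr x : ~ lt x x by case.
have lt_trans x y z : lt x y -> lt y z -> lt x z.
  move=> [xy nxy] [yz nyz]; split; first exact: Rtrans xy yz.
  by move=> exz; subst z; apply: nxy; apply: Ranti; rewrite xy yz.
have lt_trichotomy x y : x = y \/ lt x y \/ lt y x.
  have [->|nxy] := pselect (x = y); [by left | right].
  by case/orP: (Rtotal x y) => h; [left|right]; split=> // eyx; apply: nxy.
have lt_min (S : set T) : S !=set0 -> exists2 m, S m & forall b, S b -> ~ lt b m.
  move=> [x Sx]; have : nonempty [pred t : {classic T} | `[< S t >]].
    by exists x; rewrite in_simpl; apply/asboolP.
  case/Rwo => m [[+ mlb] _]; rewrite in_simpl => /asboolP Sm.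
  exists m => // b Sb [bm]; apply; apply: Ranti; rewrite bm mlb //.
  by rewrite in_simpl; apply/asboolP.
by constructor; exists (StrictTotalOrder lt_irr lt_trans lt_trichotomy).
Qed.

Lemma card_le_injection (T U : Type) (A : set T) (B : set U) (u : U) :
  (A #<= B)%card -> exists2 g : T -> U, (forall x, A x -> B (g x)) & {in A &, injective g}.
Proof.
elim/Ppointed: U => U in B u *; first by case: (no u).
by move=> /pcard_leP; rewrite injfunPex => -[g gAB ginj]; exists g.
Qed.

Section Pullback.
Variables (T U : Type) (g : T -> U).
Hypothesis g_inj : injective g.

Lemma pullback_trichotomy (s : strict_total_order U) a b :
  a = b \/ s (g a) (g b) \/ s (g b) (g a).
Proof. by case: (sto_trichotomy s (g a) (g b)) => [/g_inj|]; [left|right]. Qed.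

Definition pullback_sto (s : strict_total_order U) : strict_total_order T :=
  StrictTotalOrder (fun a => sto_irr s (g a)) (fun a b c => @sto_trans _ s (g a) (g b) (g c))
    (pullback_trichotomy s).

Lemma pullback_min (w : strict_well_order U) (S : set T) : S !=set0 ->
  exists2 m, S m & forall b, S b -> ~ pullback_sto w b m.
Proof.
move=> [x Sx]; have [_ [m Sm <-] mmin] := swo_min w (g @` S) (ex_intro _ (g x) (imageP g Sx)).
by exists m => // b Sb; apply: mmin; exists b.
Qed.

Definition pullback_swo (w : strict_well_order U) : strict_well_order T :=
  StrictWellOrder (@pullback_min w).

End Pullback.

(* If some segment of w is as large as K, pull w back along an injection of K
   into the first such segment: each new segment then injects into an earlier,
   hence small, segment of w. *)
Lemma small_segments_well_order (K : Type) :
  exists w : strict_well_order K, forall a, ~ ([set: K] #<= [set b | w b a])%card.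
Proof.
have [w] := strict_well_order_inhabited K.
pose big a := ([set: K] #<= [set b | w b a])%card.
have [[a1 big_a1]|all_small] := pselect (exists a, big a); last first.
  by exists w => a big_a; apply: all_small; exists a.
have [a0 big_a0 a0_min] := swo_min w big (ex_intro _ a1 big_a1).
have [g g_below g_inj] := card_le_injection a0 big_a0.
have {}g_inj : injective g by move=> x y; apply: g_inj; rewrite in_setT.
exists (pullback_swo g_inj w) => a big_a; apply: (a0_min (g a)); last exact: g_below.
apply: (card_le_trans big_a).
apply: (@card_le_trans _ _ _ (g @` [set b | pullback_swo g_inj w b a])).
  by rewrite (card_le_eqr (inj_card_eq (in2W g_inj))) card_lexx.
by apply: subset_card_le => _ [b ba <-].
Qed.

(** * Coding powers of X by members of discrete clopen families *)

Lemma prod_topology_box_nbhs (I : finType) (T : I -> topologicalType)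
    (x : prod_topology T) (W : forall i, set (T i)) :
  (forall i, nbhs (x i) (W i)) -> nbhs x [set y : prod_topology T | forall i, W i (y i)].
Proof.
move=> xW; have xWi i : nbhs x [set y : prod_topology T | W i (y i)].
  exact: (@proj_continuous I T i x (W i) (xW i)).
exact: (@filter_forall _ I (fun i => [set y : prod_topology T | W i (y i)]) _ _ xWi).
Qed.

Lemma prod_topology_cvg (I : Type) (T : I -> topologicalType)
    (F : set_system (prod_topology T)) (x : prod_topology T) :
  Filter F -> (forall i (V : set (T i)), open V -> V (x i) -> F [set y | V (y i)]) ->
  F --> x.
Proof.
move=> FF xF; apply/cvg_sup => i A /=.
rewrite (@nbhsE (Topological.Pack _)) => -[B [[V oV <-] Bx] BA].
by rewrite nbhs_filterE; apply: filterS BA (xF i V oV Bx).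
Qed.

Section DiscreteClopenFamily.
Variables (X : topologicalType) (F : set (set X)).
Hypothesis F_discrete : discrete_family F.
Hypothesis F_clopen : forall U, F U -> clopen U.

Definition members_at (p : X) : set (set X) := [set U | F U /\ U p].

Lemma discrete_family_disjoint U V p : F U -> F V -> U p -> V p -> U = V.
Proof.
move=> FU FV Up Vp; have [N [Np NF]] := F_discrete p.
by apply: NF => //; exists p; split=> //; apply: nbhs_singleton Np.
Qed.

Lemma members_at_locally_constant q : nbhs q [set r | members_at r = members_at q].
Proof.
have [[U0 [FU0 U0q]]|none] := pselect (exists U, F U /\ U q).
  apply: filterS (open_nbhs_nbhs (conj (F_clopen FU0).1 U0q)) => r U0r.
  apply/seteqP; split=> U [FU Up]; split=> //.
    by rewrite (discrete_family_disjoint FU FU0 Up U0r).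
  by rewrite (discrete_family_disjoint FU FU0 Up U0q).
suff : nbhs q [set r | forall U, F U -> ~ U r].
  apply: filterS => r rF; apply/seteqP; split=> U [FU Ur].
    by case: (rF U FU Ur).
  by case: none; exists U.
have [N [Nq NF]] := F_discrete q.
have [[V [FV NV]]|nomeet] := pselect (exists V, F V /\ N `&` V !=set0).
  have nVq : (~` V) q by move=> Vq; apply: none; exists V.
  have oVc : open (~` V) by rewrite openC; exact: (F_clopen FV).2.
  apply: filterS (filterI Nq (open_nbhs_nbhs (conj oVc nVq))) => r [Nr nVr] U FU Ur.
  have UV : U = V by apply: NF => //; exists r.
  by apply: nVr; rewrite -UV.
by apply: filterS Nq => r Nr U FU Ur; apply: nomeet; exists U; split=> //; exists r.
Qed.

Lemma members_at_open p : open [set q | members_at q = members_at p].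
Proof.
by rewrite openE => q qp; apply: filterS (members_at_locally_constant q) => r /= ->.
Qed.

End DiscreteClopenFamily.

Lemma discrete_sp_open (X : topologicalType) : discrete_sp X -> forall A : set X, open A.
Proof.
by move=> Xd A; rewrite -[A]image_id -bigcup_imset1; apply: bigcup_open => x _.
Qed.

Lemma subsingleton_GO (Y : topologicalType) : (forall x y : Y, x = y) -> GO_space Y.
Proof.
move=> Y_sub; exists _, (order_topology nat), (fun=> 0%N).
split; first by move=> x y _; apply: Y_sub.
split=> [|U oU]; first exact: cst_continuous.
have [[u Uu]|U0] := pselect (U !=set0).
  exists setT; split; first exact: openT.
  by rewrite setTI; apply/seteqP; split=> _ [y _ <-]; [exists y | exists u].
exists set0; split; first exact: open0.
by rewrite set0I; apply/seteqP; split=> // z [y Uy _]; case: U0; exists y.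
Qed.

Section ClopenCode.
Variables (X : topologicalType) (K : Type) (B : K -> set (set X)).
Variable w : strict_well_order K.
Hypothesis X_T1 : accessible_space X.
Hypothesis B_discrete : forall a, discrete_family (B a).
Hypothesis B_clopen : forall a U, B a U -> clopen U.
Hypothesis B_basis : basis (\bigcup_(a in [set: K]) B a).
Hypothesis segment_bigcap_open : forall a (V : K -> set X),
  (forall b, w b a -> open (V b)) -> open (\bigcap_(b in [set b | w b a]) V b).
Variable I : finType.
Local Notation XI := {ptws I -> X}.

Definition clopen_code (a : K) (y : XI) : I -> set (set X) :=
  fun i => members_at (B a) (y i).

Lemma members_at_base p V : nbhs p V ->
  exists a, forall q, members_at (B a) q = members_at (B a) p -> V q.
Proof.
move=> pV; have [U [[a _ BaU] Up] UV] := B_basis.2 p V pV.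
exists a => q qp; apply: UV; have : members_at (B a) p U by [].
by rewrite -qp => -[].
Qed.

Lemma clopen_code_sep (x y : XI) : (forall a, clopen_code a x = clopen_code a y) -> x = y.
Proof.
move=> xy; apply: funext => i; apply: contrapT => nxy.
have [A [oA xA yA]] := X_T1 (introN eqP nxy).
have [a aA] := members_at_base (open_nbhs_nbhs (conj oA (set_mem xA))).
move/set_mem: yA; apply; apply: aA.
exact: (congr1 (fun f => f i) (esym (xy a))).
Qed.

Lemma clopen_code_cell_nbhs (x : XI) a : nbhs x (lex_cell w clopen_code a x).
Proof.
pose W i := \bigcap_(b in [set b | w b a])
    [set q | members_at (B b) q = members_at (B b) (x i)] `&`
  [set q | members_at (B a) q = members_at (B a) (x i)].
have W_open i : open (W i).
  apply: openI; [apply: segment_bigcap_open => b _|];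
  exact: members_at_open (B_discrete _) (@B_clopen _) _.
have W_x i : W i (x i) by [].
apply: filterS (prod_topology_box_nbhs (fun i => open_nbhs_nbhs (conj (W_open i) (W_x i)))).
move=> y yW b ba; apply: funext => i; have [yb ya] := yW i.
by case: ba => [->//|ba]; apply: yb.
Qed.

Lemma clopen_code_cell_base (k0 : K) (x : XI) U : nbhs x U ->
  exists a, lex_cell w clopen_code a x `<=` U.
Proof.
pose F := filter_from [set: K] (lex_cell w clopen_code ^~ x).
have F_filter : Filter F.
  apply: filter_from_filter; first by exists k0.
  move=> a1 a2 _ _; have [a [a1a a2a]] := sto_le_total w a1 a2.
  by exists a => // y ya; split; apply: agree_upto_le ya.
suff /(_ U) : F --> x by move=> /[apply] -[a _ aU]; exists a.
apply: prod_topology_cvg => i V oV Vx.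
have [a aV] := members_at_base (open_nbhs_nbhs (conj oV Vx)).
exists a => // y ya; apply: aV.
by have := ya a (or_introl erefl); move/(congr1 (fun f => f i)).
Qed.

Lemma clopen_code_GO : GO_space XI.
Proof.
have [[k0]|noK] := pselect (inhabited K); last first.
  (* B is a base, so K is empty only if X is. *)
  apply: subsingleton_GO => x y; apply: funext => i; exfalso.
  by have [a _] := @members_at_base (x i) setT filterT; apply: noK.
have [sD] := strict_well_order_inhabited (I -> set (set X)).
exact: (lex_code_GO sD k0 clopen_code_cell_nbhs (clopen_code_cell_base k0) clopen_code_sep).
Qed.

End ClopenCode.

Theorem theorem2p4 (X : topologicalType) (K : Type) :
  tychonoff_space X -> pnumber_is X K -> tau_discrete_clopen_basis X K ->
  forall n : nat, GO_space {ptws 'I_n -> X}.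
Proof.
move=> [X_T1 _] [_ X_pnumber] [B [B_discrete [B_clopen B_basis]]] n.
have [w w_small] := small_segments_well_order K.
apply: (clopen_code_GO (w := w)) => // a V V_open.
have [X_discrete|X_nondiscrete] := pselect (discrete_sp X).
  exact: discrete_sp_open.
exact: (X_pnumber X_nondiscrete).1 _ (w_small a) V V_open.
Qed.
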